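(* Let $0<\varepsilon_s<1/2$, $0<\varepsilon_a<1/2$ and $0<\varepsilon_{small}\le\varepsilon_s/2$. Let $\tilde M$ be a finite set of rectangles with $w(i)\le\varepsilon_{small}N$ and $h(i)\le N$ for all $i\in\tilde M$, and with $a(\tilde M)\le(\frac12+\varepsilon_a)N^2$. Then a subset of $\tilde M$ of cardinality at least $(1-2\varepsilon_s-2\varepsilon_a)|\tilde M|$ can be packed (without rotations, with pairwise disjoint interiors) into $[0,(1-\varepsilon_s)N]\times[0,N]$.
   Context: Rectangles are axis-parallel with width $w(i)$ and height $h(i)$; $a(S)=\sum_{i\in S}w(i)h(i)$. *)

From Stdlib Require Import Reals List.
Import ListNotations.
Open Scope R_scope.

(* Rectangles are indexed by 0..n-1; rectangle i has width w i and height h i. *)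

Definition area (w h : nat -> R) (S : list nat) : R :=
  fold_right (fun i acc => w i * h i + acc) 0 S.

Definition interiors_disjoint (x y w h x' y' w' h' : R) : Prop :=
  x + w <= x' \/ x' + w' <= x \/ y + h <= y' \/ y' + h' <= y.

Definition packable (w h : nat -> R) (S : list nat) (W H : R) : Prop :=
  exists px py : nat -> R,
    (forall i, In i S ->
       0 <= px i /\ px i + w i <= W /\ 0 <= py i /\ py i + h i <= H) /\
    (forall i j, In i S -> In j S -> i <> j ->
       interiors_disjoint (px i) (py i) (w i) (h i) (px j) (py j) (w j) (h j)).

From Stdlib Require Import Reals List Lra Lia Psatz Permutation Sorted.
Import ListNotations.
Open Scope R_scope.

(* Charge every rectangle the width it needs: a tall one (2h > N) its width w, any other one
   2wh/N.  Tall rectangles stand side by side on the floor; the others, sorted by decreasing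
   width, are stacked next-fit into columns of height N, whose total width exceeds the widest
   rectangle by at most 2/N times their area.  Hence any set of rectangles fits into width
   eps_small N plus its total charge.  All rectangles together are charged at most
   (1 + 2 eps_a) N, and the ceil((1 - 2 eps_s - 2 eps_a) n) cheapest ones are charged at most
   that fraction of it plus one rectangle's charge, which fits into (1 - eps_s) N. *)

Fixpoint sum_over (f : nat -> R) (L : list nat) : R :=
  match L with [] => 0 | i :: L' => f i + sum_over f L' end.

Lemma area_sum_over w h L : area w h L = sum_over (fun i => w i * h i) L.
Proof. induction L; simpl; congruence. Qed.

Lemma sum_over_app f L1 L2 : sum_over f (L1 ++ L2) = sum_over f L1 + sum_over f L2.
Proof. induction L1; simpl; lra. Qed.

Lemma sum_over_perm f L M : Permutation L M -> sum_over f L = sum_over f M.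
Proof. induction 1; simpl; lra. Qed.

Lemma sum_over_le f g L :
  (forall i, In i L -> f i <= g i) -> sum_over f L <= sum_over g L.
Proof.
  induction L as [|x L IH]; simpl; intros Hfg; [lra|].
  assert (f x <= g x) by auto. assert (sum_over f L <= sum_over g L) by auto. lra.
Qed.

Lemma sum_over_nonneg f L : (forall i, In i L -> 0 <= f i) -> 0 <= sum_over f L.
Proof.
  intros Hf. apply (sum_over_le (fun _ => 0)) in Hf.
  enough (sum_over (fun _ => 0) L = 0) by lra.
  clear Hf; induction L; simpl; lra.
Qed.

Lemma sum_over_le_const f b L :
  (forall i, In i L -> f i <= b) -> sum_over f L <= INR (length L) * b.
Proof.
  intros Hf. apply (sum_over_le _ (fun _ => b)) in Hf.
  enough (sum_over (fun _ => b) L = INR (length L) * b) by lra.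
  clear Hf; induction L as [|x L IH]; [simpl; ring|].
  cbn [sum_over length]; rewrite IH, S_INR; ring.
Qed.

Lemma sum_over_scal k f L : sum_over (fun i => k * f i) L = k * sum_over f L.
Proof. induction L; simpl; [ring | rewrite IHL; ring]. Qed.

Lemma sum_over_if_filter (p : nat -> bool) f g L :
  sum_over (fun i => if p i then f i else g i) L =
  sum_over f (filter p L) + sum_over g (filter (fun i => negb (p i)) L).
Proof. induction L as [|x L IH]; simpl; [lra|]. destruct (p x); simpl; lra. Qed.

Lemma exists_max (f : nat -> R) L :
  L <> [] -> exists x, In x L /\ forall z, In z L -> f z <= f x.
Proof.
  induction L as [|y L IH]; intros Hne; [congruence|].
  destruct L as [|y' L].
  { exists y. split; [now left|]. intros z [<-|[]]; lra. }
  destruct IH as [x [Hx Hmax]]; [discriminate|].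
  destruct (Rle_dec (f x) (f y)).
  - exists y. split; [now left|]. intros z [<-|Hz]; [lra|]. specialize (Hmax z Hz); lra.
  - exists x. split; [now right|]. intros z [<-|Hz]; [lra|auto].
Qed.

Lemma drop_max_average f K :
  NoDup K -> K <> [] ->
  exists K', NoDup K' /\ incl K' K /\ S (length K') = length K /\
    INR (length K) * sum_over f K' <= INR (length K') * sum_over f K.
Proof.
  intros HK Hne. destruct (exists_max f K Hne) as [x [Hx Hmax]].
  destruct (in_split x K Hx) as [l1 [l2 ->]].
  exists (l1 ++ l2). split; [eapply NoDup_remove_1; eauto|]. split.
  { intros z Hz. apply in_app_or in Hz. apply in_or_app. simpl. tauto. }
  assert (Hlen : length (l1 ++ x :: l2) = S (length (l1 ++ l2))).
  { rewrite !length_app. simpl. lia. }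
  split; [auto|].
  assert (Hsum : sum_over f (l1 ++ x :: l2) = f x + sum_over f (l1 ++ l2)).
  { rewrite !sum_over_app. simpl. ring. }
  pose proof (sum_over_le_const f (f x) _ Hmax) as Hbound.
  rewrite Hlen, S_INR in *. rewrite Hsum in *. nra.
Qed.

Lemma exists_cheap_sublist f L :
  NoDup L -> forall k, (k <= length L)%nat ->
  exists K, NoDup K /\ incl K L /\ length K = k /\
    INR (length L) * sum_over f K <= INR k * sum_over f L.
Proof.
  intros HL k Hk. remember (length L - k)%nat as d eqn:Hd.
  revert k Hk Hd. induction d as [|d IH]; intros k Hk Hd.
  - exists L. repeat split; auto using incl_refl; [lia|].
    replace k with (length L) by lia. lra.
  - destruct (IH (S k)) as [K [HK [Hincl [Hlen Havg]]]]; [lia|lia|].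
    destruct (drop_max_average f K HK) as [K' [HK' [Hincl' [Hlen' Havg']]]].
    { intros ->. simpl in Hlen. lia. }
    exists K'. split; [auto|]. split; [eapply incl_tran; eauto|].
    assert (Hk' : length K' = k) by lia. split; [auto|].
    rewrite Hlen, Hk', S_INR in *.
    pose proof (pos_INR k). pose proof (pos_INR (length L)).
    apply (Rmult_le_reg_l (INR k + 1)); [lra|]. nra.
Qed.

Definition pairwise_disjoint (w h px py : nat -> R) (L : list nat) : Prop :=
  forall i j, In i L -> In j L -> i <> j ->
    interiors_disjoint (px i) (py i) (w i) (h i) (px j) (py j) (w j) (h j).

Definition upd (f : nat -> R) (x : nat) (v : R) : nat -> R :=
  fun i => if Nat.eq_dec i x then v else f i.

Lemma upd_same f x v : upd f x v x = v.
Proof. unfold upd. destruct (Nat.eq_dec x x); congruence. Qed.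

Lemma upd_other f x v i : i <> x -> upd f x v i = f i.
Proof. unfold upd. destruct (Nat.eq_dec i x); congruence. Qed.

Lemma interiors_disjoint_sym x y w h x' y' w' h' :
  interiors_disjoint x y w h x' y' w' h' -> interiors_disjoint x' y' w' h' x y w h.
Proof. unfold interiors_disjoint. tauto. Qed.

Lemma interiors_disjoint_shift s x y w h x' y' w' h' :
  interiors_disjoint x y w h x' y' w' h' ->
  interiors_disjoint (s + x) y w h (s + x') y' w' h'.
Proof. unfold interiors_disjoint. lra. Qed.

Lemma pairwise_disjoint_cons w h px py x a b L :
  ~ In x L -> pairwise_disjoint w h px py L ->
  (forall i, In i L -> interiors_disjoint a b (w x) (h x) (px i) (py i) (w i) (h i)) ->
  pairwise_disjoint w h (upd px x a) (upd py x b) (x :: L).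
Proof.
  intros Hx Hd Hnew i j Hi Hj Hij.
  assert (Hupd : forall k, In k L -> upd px x a k = px k /\ upd py x b k = py k).
  { intros k Hk. rewrite !upd_other; [auto| |]; intros ->; contradiction. }
  destruct Hi as [<-|Hi], Hj as [<-|Hj]; [congruence| | |].
  - rewrite !upd_same. destruct (Hupd j Hj) as [-> ->]. auto.
  - rewrite !upd_same. destruct (Hupd i Hi) as [-> ->]. auto using interiors_disjoint_sym.
  - destruct (Hupd i Hi) as [-> ->], (Hupd j Hj) as [-> ->]. auto.
Qed.

Lemma packable_nil w h W H : packable w h [] W H.
Proof. exists (fun _ => 0), (fun _ => 0). split; [intros ? [] | intros ? ? []]. Qed.

Lemma packable_incl w h K L W H : incl K L -> packable w h L W H -> packable w h K W H.
Proof.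
  intros Hincl [px [py [Hbox Hd]]]. exists px, py.
  split; intros; [apply Hbox | apply Hd]; auto.
Qed.

Lemma packable_widen w h L W W' H : W <= W' -> packable w h L W H -> packable w h L W' H.
Proof.
  intros HW [px [py [Hbox Hd]]]. exists px, py. split; [|auto].
  intros i Hi. specialize (Hbox i Hi). lra.
Qed.

Lemma packable_single w h x H : h x <= H -> packable w h [x] (w x) H.
Proof.
  intros Hh. exists (fun _ => 0), (fun _ => 0). split.
  - intros i [<-|[]]. lra.
  - intros i j [<-|[]] [<-|[]]. congruence.
Qed.

Lemma packable_side_by_side w h L1 L2 W1 W2 H :
  0 <= W1 -> 0 <= W2 -> (forall i, In i L1 -> ~ In i L2) ->
  packable w h L1 W1 H -> packable w h L2 W2 H -> packable w h (L1 ++ L2) (W1 + W2) H.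
Proof.
  intros HW1 HW2 Hdisj [px1 [py1 [Hbox1 Hd1]]] [px2 [py2 [Hbox2 Hd2]]].
  exists (fun i => if in_dec Nat.eq_dec i L1 then px1 i else W1 + px2 i),
         (fun i => if in_dec Nat.eq_dec i L1 then py1 i else py2 i).
  assert (HL2 : forall i, In i (L1 ++ L2) -> ~ In i L1 -> In i L2).
  { intros i Hi Hn. apply in_app_or in Hi. tauto. }
  split.
  - intros i Hi. destruct (in_dec Nat.eq_dec i L1) as [H1|H1].
    + specialize (Hbox1 i H1). lra.
    + specialize (Hbox2 i (HL2 i Hi H1)). lra.
  - intros i j Hi Hj Hij.
    destruct (in_dec Nat.eq_dec i L1) as [Hi1|Hi1], (in_dec Nat.eq_dec j L1) as [Hj1|Hj1].
    + auto.
    + specialize (Hbox1 i Hi1). specialize (Hbox2 j (HL2 j Hj Hj1)).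
      left. lra.
    + specialize (Hbox1 j Hj1). specialize (Hbox2 i (HL2 i Hi Hi1)).
      right. left. lra.
    + apply interiors_disjoint_shift, Hd2; auto.
Qed.

Lemma packable_row w h L H :
  NoDup L -> (forall i, In i L -> 0 <= w i /\ h i <= H) ->
  packable w h L (sum_over w L) H.
Proof.
  induction L as [|x L IH]; intros HL Hwh.
  - apply packable_nil.
  - inversion HL as [|? ? Hx HL']; subst.
    destruct (Hwh x (or_introl eq_refl)) as [Hw Hh].
    apply (packable_side_by_side w h [x] L); auto using packable_single.
    + apply sum_over_nonneg. intros i Hi. apply Hwh; now right.
    + intros i [<-|[]]; auto.
    + apply IH; auto. intros i Hi. apply Hwh; now right.
Qed.

Definition width_decreasing (w : nat -> R) : list nat -> Prop :=
  StronglySorted (fun i j => w j <= w i).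

Lemma width_decreasing_insert w M x :
  width_decreasing w M -> exists M', Permutation (x :: M) M' /\ width_decreasing w M'.
Proof.
  induction M as [|y M IH]; intros HM.
  - exists [x]. split; [auto|]. repeat constructor.
  - apply StronglySorted_inv in HM as [HM Hy]. rewrite Forall_forall in Hy.
    destruct (Rle_dec (w y) (w x)).
    + exists (x :: y :: M). split; [auto|]. constructor; [now constructor; [|apply Forall_forall]|].
      constructor; [lra|]. apply Forall_forall. intros z Hz. specialize (Hy z Hz). simpl in Hy. lra.
    + destruct (IH HM) as [M' [Hperm Hsorted]]. exists (y :: M'). split.
      * eapply perm_trans; [apply perm_swap | now apply perm_skip].
      * constructor; [auto|]. apply Forall_forall. intros z Hz.
        apply (Permutation_in z (Permutation_sym Hperm)) in Hz as [<-|Hz]; [simpl; lra | auto].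
Qed.

Lemma exists_width_decreasing_perm w L :
  exists M, Permutation L M /\ width_decreasing w M.
Proof.
  induction L as [|x L [M [Hperm Hsorted]]].
  - exists []. split; constructor.
  - destruct (width_decreasing_insert w M x Hsorted) as [M' [Hperm' Hsorted']].
    exists M'. split; [|auto]. eapply perm_trans; [apply perm_skip|]; eauto.
Qed.

(* [L] lies in the strip [X, X+c+E] x [0, N], outside the open column [X, X+c] x [0, y]. *)
Definition packed_beside (w h : nat -> R) (N X c y E : R) (px py : nat -> R) (L : list nat) :=
  (forall i, In i L ->
     X <= px i /\ px i + w i <= X + c + E /\ 0 <= py i /\ py i + h i <= N /\
     (X + c <= px i \/ y <= py i)) /\
  pairwise_disjoint w h px py L.

Lemma packed_beside_stack w h N X c y E px py x L :
  ~ In x L -> 0 <= w x <= c -> 0 <= h x -> 0 <= y -> y + h x <= N -> 0 <= E ->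
  packed_beside w h N X c (y + h x) E px py L ->
  packed_beside w h N X c y E (upd px x X) (upd py x y) (x :: L).
Proof.
  intros Hx Hw Hh Hy Hfit HE [Hbox Hd]. split.
  - intros i [<-|Hi].
    + rewrite !upd_same. lra.
    + rewrite !upd_other by (intros ->; contradiction).
      specialize (Hbox i Hi). destruct Hbox as [? [? [? [? [?|?]]]]]; lra.
  - apply pairwise_disjoint_cons; auto.
    intros i Hi. specialize (Hbox i Hi). unfold interiors_disjoint.
    destruct Hbox as [? [? [? [? [?|?]]]]]; [left|right; right; left]; lra.
Qed.

Lemma packed_beside_open w h N X c y E px py x L :
  ~ In x L -> 0 <= c -> 0 <= w x -> h x <= N -> 0 <= E ->
  packed_beside w h N (X + c) (w x) (h x) E px py L ->
  packed_beside w h N X c y (w x + E) (upd px x (X + c)) (upd py x 0) (x :: L).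
Proof.
  intros Hx Hc Hw Hh HE [Hbox Hd]. split.
  - intros i [<-|Hi].
    + rewrite !upd_same. lra.
    + rewrite !upd_other by (intros ->; contradiction).
      specialize (Hbox i Hi). lra.
  - apply pairwise_disjoint_cons; auto.
    intros i Hi. specialize (Hbox i Hi). unfold interiors_disjoint.
    destruct Hbox as [? [? [? [? [?|?]]]]]; [left|right; right; left]; lra.
Qed.

(* Next fit: stack on the open column while it fits, otherwise open a new column.  A new
   column of width [w x] is paid for by the area [a] of the closed column, which is at least
   [w x] times its height, together with the area of [x]: their heights add up to more than [N]. *)
Lemma next_fit_columns w h N L :
  NoDup L -> width_decreasing w L -> (forall z, In z L -> 0 < w z /\ 0 < h z <= N) ->
  forall X c y a, 0 <= c -> 0 <= y <= N -> 0 <= a ->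
  (forall z, In z L -> w z * y <= a /\ (y + h z <= N -> w z <= c)) ->
  exists px py E, 0 <= E /\ N * E <= a + 2 * area w h L /\
    packed_beside w h N X c y E px py L.
Proof.
  induction L as [|x L IH]; intros HL Hsorted Hwh X c y a Hc Hy Ha Hinv.
  - exists (fun _ => 0), (fun _ => 0), 0. simpl. split; [lra|]. split; [nra|].
    split; [intros ? [] | intros ? ? []].
  - inversion HL as [|? ? Hx HL']; subst.
    apply StronglySorted_inv in Hsorted as [Hsorted Hwx]. rewrite Forall_forall in Hwx.
    assert (HwhL : forall z, In z L -> 0 < w z /\ 0 < h z <= N) by (intros; apply Hwh; now right).
    destruct (Hwh x (or_introl eq_refl)) as [Hw Hh].
    destruct (Hinv x (or_introl eq_refl)) as [Hxa Hxc].
    assert (Hxarea : 0 < w x * h x) by nra.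
    simpl area. destruct (Rle_dec (y + h x) N) as [Hfit|Hover].
    + destruct (IH HL' Hsorted HwhL X c (y + h x) (a + w x * h x))
        as [px [py [E [HE [Hcost Hpacked]]]]]; try lra.
      { intros z Hz. destruct (Hinv z (or_intror Hz)) as [Hza _].
        specialize (Hwx z Hz). specialize (HwhL z Hz). split; [nra|].
        specialize (Hxc Hfit). lra. }
      exists (upd px x X), (upd py x y), E. split; [lra|]. split; [lra|].
      apply packed_beside_stack; auto; lra.
    + destruct (IH HL' Hsorted HwhL (X + c) (w x) (h x) (w x * h x))
        as [px [py [E [HE [Hcost Hpacked]]]]]; try lra.
      { intros z Hz. specialize (Hwx z Hz). specialize (HwhL z Hz). split; [nra | lra]. }
      exists (upd px x (X + c)), (upd py x 0), (w x + E). split; [lra|]. split; [nra|].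
      apply packed_beside_open; auto; lra.
Qed.

Lemma packable_columns w h N wm L :
  0 < N -> 0 <= wm -> NoDup L -> width_decreasing w L ->
  (forall z, In z L -> 0 < w z <= wm /\ 0 < h z <= N) ->
  packable w h L (wm + 2 / N * area w h L) N.
Proof.
  intros HN Hwm HL Hsorted Hwh.
  destruct (next_fit_columns w h N L HL Hsorted) with (X := 0) (c := 0) (y := N) (a := N * wm)
    as [px [py [E [HE [Hcost [Hbox Hd]]]]]].
  - intros z Hz. specialize (Hwh z Hz). lra.
  - lra.
  - lra.
  - nra.
  - intros z Hz. specialize (Hwh z Hz). split; [nra | lra].
  - apply (packable_widen _ _ _ E).
    + apply (Rmult_le_reg_l N); [lra|]. rewrite Rmult_plus_distr_l.
      replace (N * (2 / N * area w h L)) with (2 * area w h L) by (field; lra). lra.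
    + exists px, py. split; [|auto]. intros i Hi. specialize (Hbox i Hi). lra.
Qed.

Definition is_tall (h : nat -> R) (N : R) (i : nat) : bool :=
  if Rle_lt_dec (2 * h i) N then false else true.

Definition cost (w h : nat -> R) (N : R) (i : nat) : R :=
  if is_tall h N i then w i else 2 / N * (w i * h i).

Lemma cost_le_width w h N i : 0 < N -> 0 <= w i -> cost w h N i <= w i.
Proof.
  intros HN Hw. unfold cost, is_tall. destruct (Rle_lt_dec (2 * h i) N); [|lra].
  apply (Rmult_le_reg_l N); [lra|].
  replace (N * (2 / N * (w i * h i))) with (w i * (2 * h i)) by (field; lra). nra.
Qed.

Lemma cost_le_area w h N i : 0 < N -> 0 <= w i -> cost w h N i <= 2 / N * (w i * h i).
Proof.
  intros HN Hw. unfold cost, is_tall. destruct (Rle_lt_dec (2 * h i) N); [lra|].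
  apply (Rmult_le_reg_l N); [lra|].
  replace (N * (2 / N * (w i * h i))) with (w i * (2 * h i)) by (field; lra). nra.
Qed.

Lemma cost_nonneg w h N i : 0 < N -> 0 <= w i -> 0 <= h i -> 0 <= cost w h N i.
Proof.
  intros HN Hw Hh. unfold cost. destruct (is_tall h N i); [lra|].
  apply Rmult_le_pos; [apply Rlt_le, Rdiv_lt_0_compat | apply Rmult_le_pos]; lra.
Qed.

Lemma packable_by_cost w h N wm S :
  0 < N -> 0 <= wm -> NoDup S ->
  (forall i, In i S -> 0 < w i <= wm /\ 0 < h i <= N) ->
  packable w h S (wm + sum_over (cost w h N) S) N.
Proof.
  intros HN Hwm HS Hwh.
  set (T := filter (is_tall h N) S).
  set (F := filter (fun i => negb (is_tall h N i)) S).
  destruct (exists_width_decreasing_perm w F) as [M [Hperm Hsorted]].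
  assert (HF : forall i, In i F <-> In i S /\ is_tall h N i = false).
  { intros i. unfold F. rewrite filter_In. destruct (is_tall h N i); simpl; intuition. }
  assert (HM : forall i, In i M <-> In i F).
  { intros i. split; apply Permutation_in; auto using Permutation_sym. }
  assert (HT : forall i, In i T <-> In i S /\ is_tall h N i = true).
  { intros i. unfold T. apply filter_In. }
  apply (packable_incl _ _ _ (T ++ M)).
  { intros i Hi. apply in_or_app. rewrite HT, HM, HF.
    destruct (is_tall h N i); tauto. }
  unfold cost. rewrite sum_over_if_filter, sum_over_scal, <- area_sum_over.
  fold T F. rewrite area_sum_over, (sum_over_perm _ _ _ Hperm), <- area_sum_over.
  replace (wm + (sum_over w T + 2 / N * area w h M))
    with (sum_over w T + (wm + 2 / N * area w h M)) by ring.
  apply packable_side_by_side.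
  - apply sum_over_nonneg. intros i Hi. apply HT in Hi as [Hi _]. specialize (Hwh i Hi). lra.
  - apply Rplus_le_le_0_compat; [auto|]. apply Rmult_le_pos.
    + apply Rlt_le, Rdiv_lt_0_compat; lra.
    + rewrite area_sum_over. apply sum_over_nonneg. intros i Hi.
      apply HM, HF in Hi as [Hi _]. specialize (Hwh i Hi). nra.
  - intros i Hi. rewrite HT in Hi. rewrite HM, HF. intros [_ Hf]. destruct Hi. congruence.
  - apply packable_row; [apply NoDup_filter; auto|].
    intros i Hi. apply HT in Hi as [Hi _]. specialize (Hwh i Hi). lra.
  - apply packable_columns; auto.
    + apply (Permutation_NoDup Hperm). apply NoDup_filter; auto.
    + intros i Hi. apply HM, HF in Hi as [Hi _]. auto.
Qed.

Lemma sum_cost_bounds w h N wm L :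
  0 < N -> (forall i, In i L -> 0 <= w i <= wm /\ 0 <= h i) ->
  0 <= sum_over (cost w h N) L /\
  sum_over (cost w h N) L <= INR (length L) * wm /\
  sum_over (cost w h N) L <= 2 / N * area w h L.
Proof.
  intros HN Hwh. split; [|split].
  - apply sum_over_nonneg. intros i Hi. specialize (Hwh i Hi). apply cost_nonneg; lra.
  - apply sum_over_le_const. intros i Hi. specialize (Hwh i Hi).
    apply Rle_trans with (w i); [apply cost_le_width|]; lra.
  - rewrite area_sum_over, <- sum_over_scal. apply sum_over_le.
    intros i Hi. specialize (Hwh i Hi). apply cost_le_area; lra.
Qed.

Lemma nat_ceil n r : 0 <= r <= INR n -> exists k, (k <= n)%nat /\ r <= INR k < r + 1.
Proof.
  induction n as [|n IH]; intros Hr.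
  - exists 0%nat. simpl in *. split; [lia | lra].
  - rewrite S_INR in Hr. destruct (Rle_dec r (INR n)).
    + destruct IH as [k [Hk Hkr]]; [lra|]. exists k. split; [lia | auto].
    + exists (S n). rewrite S_INR. split; [lia | lra].
Qed.

Lemma cheap_fraction_fits eps_s eps_a eps_small N n k C C' :
  0 < eps_s -> 0 < eps_a -> eps_small <= eps_s / 2 -> 0 < N -> 0 < n ->
  0 <= 1 - 2 * eps_s - 2 * eps_a -> 0 <= C ->
  C <= (1 + 2 * eps_a) * N -> C <= n * (eps_small * N) ->
  k < (1 - 2 * eps_s - 2 * eps_a) * n + 1 -> n * C' <= k * C ->
  eps_small * N + C' <= (1 - eps_s) * N.
Proof.
  intros Hs Ha Hsmall HN Hn Hq HC0 HCarea HCwidth Hk HC'.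
  set (q := 1 - 2 * eps_s - 2 * eps_a) in *.
  assert (HqC : q * C <= q * ((1 + 2 * eps_a) * N)) by (apply Rmult_le_compat_l; auto).
  assert (Hbudget : C' <= q * ((1 + 2 * eps_a) * N) + eps_small * N).
  { apply (Rmult_le_reg_l n); [auto|]. nra. }
  assert (q * (1 + 2 * eps_a) <= 1 - 2 * eps_s) by (unfold q; nra).
  nra.
Qed.

Theorem mainTheorem16 (eps_s eps_a eps_small N : R) (n : nat) (w h : nat -> R) :
  0 < eps_s < 1/2 ->
  0 < eps_a < 1/2 ->
  0 < eps_small <= eps_s / 2 ->
  0 < N ->
  (forall i, (i < n)%nat -> 0 < w i /\ 0 < h i) ->
  (forall i, (i < n)%nat -> w i <= eps_small * N /\ h i <= N) ->
  area w h (seq 0 n) <= (1/2 + eps_a) * N ^ 2 ->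
  exists S : list nat,
    NoDup S /\ (forall i, In i S -> (i < n)%nat) /\
    (1 - 2 * eps_s - 2 * eps_a) * INR n <= INR (length S) /\
    packable w h S ((1 - eps_s) * N) N.
Proof.
  intros Hs Ha Hsmall HN Hpos Hbound Harea.
  assert (Hitem : forall i, In i (seq 0 n) -> 0 < w i <= eps_small * N /\ 0 < h i <= N).
  { intros i Hi. apply in_seq in Hi. specialize (Hpos i ltac:(lia)).
    specialize (Hbound i ltac:(lia)). lra. }
  destruct (Rle_lt_dec ((1 - 2 * eps_s - 2 * eps_a) * INR n) 0) as [Htriv|Hqn].
  { exists []. split; [constructor|]. split; [intros ? []|]. split; [simpl; lra|].
    apply packable_nil. }
  pose proof (pos_INR n).
  assert (Hq : 0 < 1 - 2 * eps_s - 2 * eps_a) by nra.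
  assert (Hn : 0 < INR n) by nra.
  destruct (nat_ceil n ((1 - 2 * eps_s - 2 * eps_a) * INR n)) as [k [Hkn Hk]]; [nra|].
  destruct (exists_cheap_sublist (cost w h N) (seq 0 n) (seq_NoDup n 0) k)
    as [S [HS [Hincl [Hlen Hcheap]]]]; [now rewrite length_seq|].
  destruct (sum_cost_bounds w h N (eps_small * N) (seq 0 n)) as [HC0 [HCwidth HCarea]];
    [auto | intros i Hi; specialize (Hitem i Hi); lra|].
  rewrite length_seq in Hcheap, HCwidth.
  assert (HCtotal : 2 / N * area w h (seq 0 n) <= (1 + 2 * eps_a) * N).
  { apply (Rmult_le_reg_l (N / 2)); [lra|].
    replace (N / 2 * (2 / N * area w h (seq 0 n))) with (area w h (seq 0 n)) by (field; lra).
    nra. }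
  exists S. split; [auto|]. split; [intros i Hi; apply Hincl, in_seq in Hi; lia|].
  split; [rewrite Hlen; lra|].
  apply (packable_widen _ _ _ (eps_small * N + sum_over (cost w h N) S)).
  - apply (cheap_fraction_fits eps_s eps_a eps_small N (INR n) (INR k)
             (sum_over (cost w h N) (seq 0 n))); lra.
  - apply packable_by_cost; [lra | nra | auto |]. intros i Hi. apply Hitem, Hincl, Hi.
Qed.
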